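(* For every integer $n\ge2$, \[ Q_n(x)=\sum_{j=0}^{\lfloor n/2\rfloor}Y(n-j,j)(1+x)^j=\sum_{j=0}^{\lfloor n/2\rfloor}\left(\binom{n-j}{j}+\binom{n-j-1}{j-1}\right)(1+x)^j . \]
   Context: For $n\ge1$ let $\Xi_n$ be the poset on $\{x_1,\dots,x_n\}$ whose cover relations are exactly: $x_2\prec x_1$, $x_3\prec x_2$, and for $3\le i\le n-1$, $x_i\prec x_{i+1}$ if $i$ is odd and $x_{i+1}\prec x_i$ if $i$ is even (so $x_1>x_2>x_3<x_4>x_5<\cdots$). A filter of a poset is an up-closed subset. The matchable Lucas cube $\Omega_n$ is the graph whose vertices are the filters of $\Xi_n$, two filters adjacent iff one is obtained from the other by deleting a single element. $q_{n,k}$ denotes the number of induced subgraphs of $\Omega_n$ isomorphic to the $k$-dimensional hypercube, and $Q_n(x)=\sum_{k\ge0}q_{n,k}x^k$. The Lucas triangle is $Y(n,k)=\binom nk+\binom{n-1}{k-1}$ for $0\le k\le n$ (binomial coefficients with negative lower index are $0$ except that $\binom{-1}{-1}=1$). *)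

From HB Require Import structures.
From mathcomp Require Import all_boot all_order all_algebra.
Set Implicit Arguments. Unset Strict Implicit. Unset Printing Implicit Defensive.
Import GRing.Theory.

(* Element x_{i+1} of Xi_n is represented by i : 'I_n (0-indexed). *)

(* Cover relation of Xi_n, 1-indexed: xi_cov1 n a b  <=>  x_a covered by x_b (x_a ≺ x_b). *)
Definition xi_cov1 (n a b : nat) : bool :=
  [|| (a == 2) && (b == 1),
      (a == 3) && (b == 2),
      [&& 3 <= a, a <= n.-1, odd a & b == a.+1]
    | [&& 3 <= b, b <= n.-1, ~~ odd b & a == b.+1]].

Definition xi_cov (n : nat) : rel 'I_n := fun i j => xi_cov1 n i.+1 j.+1.

Definition xi_le (n : nat) (i j : 'I_n) : bool := connect (@xi_cov n) i j.

Definition is_filter (n : nat) (F : {set 'I_n}) : bool :=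
  [forall i, forall j, (i \in F) && xi_le i j ==> (j \in F)].

Definition filters (n : nat) : {set {set 'I_n}} := [set F | is_filter F].

Definition omega_adj (n : nat) (F G : {set 'I_n}) : bool :=
  ((G \subset F) && (#|F :\: G| == 1)) || ((F \subset G) && (#|G :\: F| == 1)).

Definition cube_adj (k : nat) (A B : {set 'I_k}) : bool :=
  #|(A :\: B) :|: (B :\: A)| == 1.

Definition induces_cube (n k : nat) (V : {set {set 'I_n}}) : bool :=
  (V \subset filters n) &&
  [exists f : {ffun {set 'I_k} -> {set 'I_n}},
     [&& injectiveb f, f @: [set: {set 'I_k}] == V &
         [forall A, forall B, omega_adj (f A) (f B) == cube_adj A B]]].

Definition q (n k : nat) : nat := #|[set V : {set {set 'I_n}} | induces_cube k V]|.

(* Lucas triangle Y(m,k) = C(m,k) + C(m-1,k-1), with C(-1,-1) = 1 and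
   binomials with negative lower index equal to 0. (Only used for 0 <= k <= m.) *)
Definition Y (m k : nat) : nat :=
  'C(m, k) + (if k is k'.+1 then 'C(m.-1, k') else (m == 0 : nat)).

(* An induced k-cube of Omega_n is affine: since two distinct neighbours of a
   set have at most one other common neighbour, an embedding f of the cube
   satisfies f(A) = f(0) xor c(A) for an injective c on coordinates.  Hence the induced cubes are exactly the sets {X u T | T <= S}
   with X a filter and S a k-set of elements each of which can be added to X on
   its own, and q_{n,k} = sum_F C(a(F), k), where a(F) counts the elements
   addable to the filter F; so Q_n(x) = sum_F (1+x)^{a(F)}.
   Every cover of Xi_n joins consecutive elements, so on indicator bit sequences
   both being a filter and being addable are conditions on adjacent bits, and
   sum_F y^{a(F)} is computed by a three-state transfer matrix reading the bits
   left to right.  From x_3 on the covers alternate in direction, and two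
   consecutive transfer steps yield the Lucas recurrence
   L_{m+2} = L_{m+1} + y L_m of L_m = sum_j Y(m-j, j) y^j. *)

From mathcomp Require Import all_boot all_order all_algebra.
From mathcomp Require Import zify ring.
Set Implicit Arguments. Unset Strict Implicit. Unset Printing Implicit Defensive.
Import GRing.Theory.

Section SymmetricDifference.
Variable U : finType.
Implicit Types (X Y Z W S : {set U}) (x : U).

Definition symdiff X Y := (X :\: Y) :|: (Y :\: X).

Lemma in_symdiff X Y x : (x \in symdiff X Y) = (x \in X) (+) (x \in Y).
Proof. by rewrite !inE; case: (x \in X); case: (x \in Y). Qed.

Lemma symdiff1P X Y :
  reflect (exists a, forall x, (x \in Y) = (x \in X) (+) (x == a))
          (#|symdiff X Y| == 1).
Proof.
apply: (iffP cards1P) => -[a Ha]; exists a.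
- move=> x; move/setP/(_ x): Ha; rewrite in_symdiff in_set1.
  by case: (x \in X); case: (x \in Y) => /= <-.
- by apply/setP => x; rewrite in_symdiff in_set1 Ha; case: (x \in X); case: (x == a).
Qed.

Lemma symdiff1_setU1 X a : a \notin X -> #|symdiff X (a |: X)| == 1.
Proof.
move=> aX; apply/symdiff1P; exists a => x; rewrite in_setU1.
by have [->|] := eqVneq x a; rewrite ?(negbTE aX) ?addbF.
Qed.

Lemma symdiff1_square X Y Z W :
  #|symdiff X Y| == 1 -> #|symdiff X Z| == 1 ->
  #|symdiff Y W| == 1 -> #|symdiff Z W| == 1 -> Y != Z -> X != W ->
  forall x, (x \in W) = (x \in Y) (+) (x \in X) (+) (x \in Z).
Proof.
move=> /symdiff1P[a Ha] /symdiff1P[b Hb] /symdiff1P[c Hc] /symdiff1P[d Hd] YZ XW.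
have key x : (x == a) (+) (x == c) = (x == b) (+) (x == d).
  by move: (Hc x) (Hd x); rewrite Ha Hb => ->; case: (x \in X); case: (_ == a);
    case: (_ == c); case: (_ == b); case: (_ == d).
have ab : a != b.
  by apply: contraNneq YZ => eab; apply/eqP/setP => x; rewrite Ha Hb eab.
have ac : a != c.
  apply: contraNneq XW => eac; apply/eqP/setP => x.
  by rewrite Hc Ha eac; case: (x \in X); case: (x == c).
have ad : a = d.
  by move: (key a); rewrite eqxx (negbTE ac) (negbTE ab) => /esym/eqP.
have cb : c = b.
  by move: (key c); rewrite -ad eqxx (eq_sym c a) (negbTE ac) addbF => /esym/eqP.
move=> x; rewrite Hc Ha Hb cb.
by case: (x \in X); case: (x == a); case: (x == b).
Qed.

Definition cube_at X S : {set {set U}} := [set X :|: A | A in powerset S].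

Lemma mem_cube_at X S (A : {set U}) : A \subset S -> X :|: A \in cube_at X S.
Proof. by move=> AS; apply: imset_f; rewrite powersetE. Qed.

Lemma cube_at_inj X S X' S' :
  [disjoint S & X] -> [disjoint S' & X'] ->
  cube_at X S = cube_at X' S' -> X = X' /\ S = S'.
Proof.
have base X1 S1 X2 S2 : cube_at X1 S1 = cube_at X2 S2 -> X2 \subset X1.
  move=> e; move: (mem_cube_at X1 (sub0set S1)); rewrite setU0 e.
  by case/imsetP => A _ ->; apply: subsetUl.
have dirs X1 S1 S2 : [disjoint S1 & X1] ->
    cube_at X1 S1 = cube_at X1 S2 -> S1 \subset S2.
  move=> dS1 e; move: (mem_cube_at X1 (subxx S1)); rewrite e.
  case/imsetP => A; rewrite powersetE => AS2 eA; apply/subsetP => s sS1.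
  have : s \in X1 :|: S1 by rewrite in_setU sS1 orbT.
  by rewrite eA in_setU (disjointFr dS1 sS1) => /(subsetP AS2).
move=> dS dS' e.
have eX : X = X' by apply/eqP; rewrite eqEsubset (base _ _ _ _ (esym e)) (base _ _ _ _ e).
subst X'; split => //.
by apply/eqP; rewrite eqEsubset (dirs _ _ _ dS e) (dirs _ _ _ dS' (esym e)).
Qed.

End SymmetricDifference.

Lemma symdiff_setU_imset (I U : finType) (h : I -> U) (X : {set U}) (A B : {set I}) :
  injective h -> (forall i, h i \notin X) ->
  symdiff (X :|: h @: A) (X :|: h @: B) = h @: symdiff A B.
Proof.
move=> h_inj hX; apply/setP => x; rewrite in_symdiff !in_setU.
have [i /eqP <- | notim] := pickP (fun i => h i == x).
  by rewrite !mem_imset // in_symdiff (negbTE (hX i)).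
have nim C : (x \in h @: C) = false.
  by apply/imsetP => -[i _ xE]; move: (notim i); rewrite xE eqxx.
by rewrite !nim; case: (x \in X).
Qed.

Section CubeEmbedding.
Variables (U : finType) (x0 : U) (k : nat) (f : {set 'I_k} -> {set U}).
Hypothesis f_inj : injective f.
Hypothesis f_adj :
  forall A B, (#|symdiff (f A) (f B)| == 1) = (#|symdiff A B| == 1).

Definition cube_dir (d : 'I_k) : U :=
  odflt x0 [pick x in symdiff (f set0) (f [set d])].

Lemma cube_embedding1 d x : (x \in f [set d]) = (x \in f set0) (+) (x == cube_dir d).
Proof.
have /symdiff1P[a Ha] : #|symdiff (f set0) (f [set d])| == 1.
  by rewrite f_adj -(setU0 [set d]) symdiff1_setU1 ?inE.
suff -> : cube_dir d = a by [].
rewrite /cube_dir; case: pickP => [y | /(_ a)]; rewrite in_symdiff Ha.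
  by case: (y \in f set0); case: eqP.
by rewrite eqxx addbT; case: (a \in f set0).
Qed.

Lemma cube_dir_inj : injective cube_dir.
Proof. by move=> d e de; apply/set1_inj/f_inj/setP => x; rewrite !cube_embedding1 de. Qed.

(* Induction on [#|A|]: for [A = d |: (e |: B)] the four sets [B], [d |: B],
   [e |: B], [A] form a square of the cube, which [f] maps to a square. *)
Lemma cube_embeddingE A x :
  (x \in f A) = (x \in f set0) (+) (x \in cube_dir @: A).
Proof.
have [m] := ubnP #|A|; elim: m => // m IH in A *; rewrite ltnS => leAm.
have [-> | [d dA]] := set_0Vmem A; first by rewrite imset0 in_set0 addbF.
have [Ad0 | [e eAd]] := set_0Vmem (A :\ d).
  have -> : A = [set d] by rewrite -(setD1K dA) Ad0 setU0.
  by rewrite cube_embedding1 imset_set1 in_set1.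
move: eAd; rewrite in_setD1 => /andP[ed eA].
set B := A :\ d :\ e.
have dB : d \notin B by rewrite !inE eqxx andbF.
have eB : e \notin B by rewrite !inE eqxx.
have dAE : A = d |: (e |: B) by rewrite /B setD1K ?setD1K // in_setD1 ed.
have eAE : A = e |: (d |: B) by rewrite setUCA.
have edB : e \notin d |: B by rewrite in_setU1 negb_or ed.
have deB : d \notin e |: B by rewrite in_setU1 negb_or eq_sym ed.
have ltdB : #|d |: B| < m by rewrite (leq_trans _ leAm) // eAE (cardsU1 e) edB.
have lteB : #|e |: B| < m by rewrite (leq_trans _ leAm) // dAE (cardsU1 d) deB.
have ltB : #|B| < m by rewrite (leq_trans _ ltdB) // cardsU1 dB.
have sq := @symdiff1_square _ (f B) (f (d |: B)) (f (e |: B)) (f A).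
rewrite sq ?f_adj ?symdiff1_setU1 //; first last.
- by apply: contraNneq dB => /f_inj ->; rewrite dAE setU11.
- apply: contraNneq ed => /f_inj/setP/(_ d); rewrite !in_setU1 eqxx (negbTE dB).
  by rewrite !orbF => /esym/eqP ->.
- by rewrite dAE symdiff1_setU1.
- by rewrite eAE symdiff1_setU1.
rewrite (IH (d |: B)) // (IH B) // (IH (e |: B)) //.
have [a /eqP <- | notdir] := pickP (fun a => cube_dir a == x).
  rewrite dAE !imsetU1 !in_setU1 !(mem_imset _ _ cube_dir_inj) !(inj_eq cube_dir_inj).
  have [->|ad] := eqVneq a d.
    by rewrite (negbTE dB) (eq_sym d) (negbTE ed); case: (_ \in f set0).
  have [->|ae] := eqVneq a e; first by rewrite (negbTE eB); case: (_ \in f set0).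
  by case: (_ \in f set0); case: (a \in B).
have nodir (C : {set 'I_k}) : (x \in cube_dir @: C) = false.
  by apply/imsetP => -[b _ xE]; move: (notdir b); rewrite xE eqxx.
by rewrite !nodir; case: (_ \in f set0).
Qed.

Lemma cube_embedding_image :
  f @: setT = cube_at (f set0 :\: cube_dir @: setT) (cube_dir @: setT).
Proof.
set S := cube_dir @: setT.
have notS x (C : {set 'I_k}) : x \notin S -> (x \in cube_dir @: C) = false.
  by move=> xS; apply: contraNF xS; apply/subsetP/imsetS/subsetT.
apply/setP => Y; apply/imsetP/imsetP => -[A].
  move=> _ ->; exists (f A :&: S); first by rewrite powersetE subsetIr.
  apply/setP => x; rewrite in_setU in_setD in_setI (cube_embeddingE A).
  have [xS | xS] := boolP (x \in S); first by rewrite andbT.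
  by rewrite (notS x A xS) addbF andbF orbF.
rewrite powersetE => AS ->.
exists [set d | (cube_dir d \in A) != (cube_dir d \in f set0)] => //.
apply/setP => x; rewrite cube_embeddingE in_setU in_setD.
have [/imsetP[d _ ->] | xS] := boolP (x \in S).
  rewrite mem_imset ?inE; last exact: cube_dir_inj.
  by case: (_ \in A); case: (_ \in f set0).
by rewrite (notS x _ xS) (contraNF (subsetP AS x) xS) addbF orbF.
Qed.

End CubeEmbedding.

Lemma omega_adjE n (F G : {set 'I_n}) : omega_adj F G = (#|symdiff F G| == 1).
Proof.
rewrite /omega_adj /symdiff; have [GF | GF] := boolP (G \subset F).
  by move: (GF); rewrite -setD_eq0 => /eqP->; rewrite setU0 cards0 andbF orbF.
have [FG | FG] := boolP (F \subset G).
  by move: (FG); rewrite -setD_eq0 => /eqP->; rewrite set0U.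
apply/esym/negP => /symdiff1P[a Ha].
have [x xG xF] := subsetPn GF; have [y yF yG] := subsetPn FG.
move: (Ha x) (Ha y); rewrite xG yF (negbTE xF) (negbTE yG) /=.
by move=> /esym/eqP xa /esym/negbFE/eqP ya; rewrite ya -xa xG in yG.
Qed.

Section InducedCubes.
Variable n : nat.
Implicit Types (F X S : {set 'I_n}).

Lemma filter_upclosed F i j : is_filter F -> i \in F -> xi_le i j -> j \in F.
Proof. by move=> /forallP/(_ i)/forallP/(_ j)/implyP FP iF ij; apply: FP; rewrite iF. Qed.

Definition addable F := [set i | (i \notin F) && is_filter (i |: F)].

Lemma is_filter_setU_addable X S :
  is_filter X -> S \subset addable X -> is_filter (X :|: S).
Proof.
move=> fX SX; apply/forallP => i; apply/forallP => j; apply/implyP => /andP[].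
rewrite in_setU => /orP[iX | iS] ij; first by rewrite in_setU (filter_upclosed fX iX ij).
move: (subsetP SX i iS); rewrite inE => /andP[_ /filter_upclosed/(_ (setU11 i X) ij)].
by rewrite !inE => /orP[/eqP-> | ->]; rewrite ?iS ?orbT.
Qed.

Definition cube_base k (XS : {set 'I_n} * {set 'I_n}) :=
  [&& is_filter XS.1, XS.2 \subset addable XS.1 & #|XS.2| == k].

Lemma cube_base_disjoint k X S : cube_base k (X, S) -> [disjoint S & X].
Proof.
case/and3P=> _ /subsetP SX _; apply/pred0P => s /=.
by apply/negP => /andP[/SX]; rewrite inE => /andP[/negbTE->].
Qed.

Lemma induces_cube_at k X S : cube_base k (X, S) -> induces_cube k (cube_at X S).
Proof.
case/and3P=> /= fX SX /eqP <-{k}.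
pose h (i : 'I_#|S|) := enum_val i.
have h_inj : injective h by apply: enum_val_inj.
have hX i : h i \notin X by move: (subsetP SX _ (enum_valP i)); rewrite inE => /andP[].
have fK (A : {set 'I_#|S|}) : [set i | h i \in X :|: h @: A] = A.
  by apply/setP => i; rewrite inE in_setU (negbTE (hX i)) mem_imset.
apply/andP; split.
  apply/subsetP => Y /imsetP[A]; rewrite powersetE => AS ->; rewrite inE.
  by apply: is_filter_setU_addable => //; apply: subset_trans SX.
apply/existsP; exists [ffun A : {set 'I_#|S|} => X :|: h @: A]; apply/and3P; split.
- by apply/injectiveP => A B; rewrite !ffunE => eAB; rewrite -(fK A) eAB fK.
- apply/eqP/setP => Y; apply/imsetP/imsetP => -[A].
    move=> _ ->; exists (h @: A); rewrite ?ffunE // powersetE.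
    by apply/subsetP => _ /imsetP[i _ ->]; apply: enum_valP.
  rewrite powersetE => AS ->; exists [set i | h i \in A] => //; rewrite ffunE.
  congr (_ :|: _); apply/setP => x; apply/idP/imsetP => [xA | [i]].
    have xS := subsetP AS x xA.
    by exists (enum_rank_in xS x); rewrite ?inE /h enum_rankK_in.
  by rewrite inE => ? ->.
- apply/forallP => A; apply/forallP => B.
  by rewrite !ffunE omega_adjE symdiff_setU_imset // card_imset.
Qed.

Lemma cube_at_of_induces_cube k V (x0 : 'I_n) :
  induces_cube k V -> exists X S, cube_base k (X, S) /\ V = cube_at X S.
Proof.
case/andP=> Vfil /existsP[f /and3P[/injectiveP f_inj /eqP fV /forallP f_adj]].
have adj A B : (#|symdiff (f A) (f B)| == 1) = (#|symdiff A B| == 1).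
  by move: (forallP (f_adj A) B); rewrite omega_adjE => /eqP.
have VE := cube_embedding_image x0 f_inj adj; rewrite fV in VE.
set S := cube_dir x0 f @: setT in VE; set X := f set0 :\: S in VE.
have filter_at (A : {set 'I_n}) : A \subset S -> is_filter (X :|: A).
  by move=> AS; move: (subsetP Vfil (X :|: A)); rewrite VE inE mem_cube_at //; apply.
exists X, S; split => //; apply/and3P; split => /=.
- by rewrite -(setU0 X) filter_at ?sub0set.
- apply/subsetP => s sS; rewrite !inE sS /= setUC.
  by rewrite filter_at // sub1set.
- by rewrite card_imset ?cardsT ?card_ord //; apply: cube_dir_inj.
Qed.

Lemma q_eq_sum_filters k (x0 : 'I_n) :
  q n k = \sum_(F | is_filter F) 'C(#|addable F|, k).
Proof.
rewrite /q; have -> : [set V | induces_cube k V] =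
                      [set cube_at p.1 p.2 | p in [set p | cube_base k p]].
  apply/setP => V; rewrite inE; apply/idP/imsetP.
    by case/(cube_at_of_induces_cube x0) => X [S [XS ->]]; exists (X, S); rewrite ?inE.
  by case=> -[X S]; rewrite inE => XS ->; apply: induces_cube_at.
rewrite card_in_imset; last first.
  move=> [X S] [X' S']; rewrite !inE => XS X'S' /= e.
  by have [-> ->] := cube_at_inj (cube_base_disjoint XS) (cube_base_disjoint X'S') e.
rewrite -sum1_card (eq_bigl _ _ (fun p => in_set _ p)).
under [RHS]eq_bigr => F _ do rewrite -cards_draws -sum1_card.
rewrite pair_big_dep; apply: eq_bigl => -[X S] /=.
by rewrite in_set /cube_base.
Qed.

End InducedCubes.

Definition rises (p : nat) : bool := (2 <= p) && ~~ odd p.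

Lemma xi_covE n (i j : 'I_n) :
  xi_cov i j = ((j == i.+1 :> nat) && rises i) || ((i == j.+1 :> nat) && ~~ rises j).
Proof.
rewrite /xi_cov /xi_cov1 /rises; have := ltn_ord i; have := ltn_ord j.
by move=> *; apply/idP/idP; lia.
Qed.

Lemma xi_cov_irr n (i : 'I_n) : xi_cov i i = false.
Proof. by rewrite xi_covE; apply/negbTE; lia. Qed.

Lemma is_filter_covE n (F : {set 'I_n}) :
  is_filter F = [forall i, forall j, (i \in F) && xi_cov i j ==> (j \in F)].
Proof.
apply/idP/idP => [fF | FP].
  apply/forallP => i; apply/forallP => j; apply/implyP => /andP[iF /connect1].
  exact: filter_upclosed.
apply/forallP => i; apply/forallP => j; apply/implyP => /andP[iF /connectP[p]].
elim: p i iF => [i iF _ -> // | y p IH i iF /= /andP[iy]]; apply: IH.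
by move/forallP/(_ i)/forallP/(_ y)/implyP: FP; apply; rewrite iF.
Qed.

Lemma is_filter_setU1 n (F : {set 'I_n}) i :
  is_filter F -> is_filter (i |: F) = [forall j, xi_cov i j ==> (j \in F)].
Proof.
move=> fF; rewrite is_filter_covE; apply/idP/idP => [iFP | iP].
  apply/forallP => j; apply/implyP => ij.
  move/forallP/(_ i)/forallP/(_ j): iFP; rewrite setU11 ij in_setU1 /=.
  by case/orP=> // /eqP ji; rewrite ji xi_cov_irr in ij.
apply/forallP => u; apply/forallP => v; apply/implyP => /andP[].
rewrite !in_setU1 => /orP[/eqP -> iv | uF uv].
  by rewrite (implyP (forallP iP v)) ?orbT.
by rewrite (filter_upclosed fF uF (connect1 uv)) orbT.
Qed.

(* Subsets of [Xi_n] are encoded by their indicator bit sequences; as every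
   cover joins consecutive positions ([xi_covE]), being a filter and being
   addable become conditions on adjacent bits. *)
Definition cover_closed (r b b' : bool) := if r then b ==> b' else b' ==> b.

Definition filter_seq (s : seq bool) :=
  all (fun p => cover_closed (rises p) (nth false s p) (nth false s p.+1))
      (iota 0 (size s).-1).

Definition addable_seq (s : seq bool) (i : nat) :=
  [&& ~~ nth false s i, (0 < i) && ~~ rises i.-1 ==> nth false s i.-1
    & (i.+1 < size s) && rises i ==> nth false s i.+1].

Definition count_addable (s : seq bool) := count (addable_seq s) (iota 0 (size s)).

Section Bits.
Variable n : nat.
Implicit Type F : {set 'I_n}.

Definition bits F := [seq i \in F | i <- enum 'I_n].

Lemma size_bits F : size (bits F) = n.
Proof. by rewrite size_map size_enum_ord. Qed.

Lemma nth_bits F (i : 'I_n) : nth false (bits F) i = (i \in F).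
Proof. by rewrite (nth_map i) ?size_enum_ord // nth_ord_enum. Qed.

Lemma bits_inj : injective bits.
Proof. by move=> F G eFG; apply/setP => i; rewrite -!nth_bits eFG. Qed.

Lemma is_filter_bits F : is_filter F = filter_seq (bits F).
Proof.
rewrite is_filter_covE /filter_seq size_bits; apply/idP/allP => [FP p | FP].
  rewrite mem_iota add0n => /andP[_ ltpn].
  have ltp : p < n by lia.
  have ltp1 : p.+1 < n by lia.
  move/forallP/(_ (Ordinal ltp))/forallP/(_ (Ordinal ltp1)): (FP).
  move/forallP/(_ (Ordinal ltp1))/forallP/(_ (Ordinal ltp)): FP.
  rewrite !xi_covE /= -(nth_bits F (Ordinal ltp)) -(nth_bits F (Ordinal ltp1)) /=.
  rewrite eqxx (_ : (p == p.+2) = false) /cover_closed; last lia.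
  by case: (rises p); rewrite /= ?andbF ?andbT ?orbF.
apply/forallP => i; apply/forallP => j; apply/implyP; rewrite xi_covE.
case/andP=> iF /orP[/andP[/eqP ji ri] | /andP[/eqP ij rj]].
  have lti : i < 0 + n.-1 by have := ltn_ord j; lia.
  by have := FP i; rewrite mem_iota lti /cover_closed ri -ji !nth_bits iF; apply.
have ltj : j < 0 + n.-1 by have := ltn_ord i; lia.
have := FP j; rewrite mem_iota ltj /cover_closed (negbTE rj) -ij !nth_bits iF.
by apply.
Qed.

Lemma addable_bits F (i : 'I_n) :
  is_filter F -> (i \in addable F) = addable_seq (bits F) i.
Proof.
rewrite inE /addable_seq size_bits nth_bits => fF; rewrite is_filter_setU1 //.
case: (i \in F) => //=; apply/forallP/andP => [iP | [lower upper] j].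
  split; apply/implyP => /andP[ltj rj].
    have ltp : i.-1 < n by have := ltn_ord i; lia.
    have := implyP (iP (Ordinal ltp)); rewrite xi_covE /= -(nth_bits F (Ordinal ltp)).
    by apply; apply/orP; right; rewrite rj andbT; apply/eqP; lia.
  have := implyP (iP (Ordinal ltj)); rewrite xi_covE /= -(nth_bits F (Ordinal ltj)).
  by apply; rewrite eqxx rj.
apply/implyP; rewrite xi_covE => /orP[/andP[/eqP ji ri] | /andP[/eqP ij rj]].
  by move: upper; rewrite -ji nth_bits ri ltn_ord => /implyP; apply.
by move: lower; rewrite ij /= nth_bits rj => /implyP; apply.
Qed.

Lemma card_addable_bits F : is_filter F -> #|addable F| = count_addable (bits F).
Proof.
move=> fF; rewrite /count_addable size_bits -sum1_card -sum1_count.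
rewrite (eq_bigl (fun i : 'I_n => addable_seq (bits F) i)) => [|i]; last first.
  by rewrite addable_bits.
by rewrite -(big_mkord (addable_seq (bits F)) (fun _ => 1)) /index_iota subn0.
Qed.

End Bits.

Fixpoint bitseqs (m : nat) : seq (seq bool) :=
  if m is m'.+1 then
    [seq rcons s true | s <- bitseqs m'] ++ [seq rcons s false | s <- bitseqs m']
  else [:: [::]].

Lemma mem_bitseqs m s : (s \in bitseqs m) = (size s == m).
Proof.
elim: m s => [|m IH] s; first by case: s.
have notin b b' t : b != b' -> rcons t b \notin [seq rcons s b' | s <- bitseqs m].
  by move=> bb'; apply/mapP => -[t' _ /rcons_inj[_ /eqP]]; rewrite (negbTE bb').
case/lastP: s => [|t b]; rewrite /= mem_cat.
  by apply/negbTE; rewrite negb_or; apply/andP; split; apply/mapP => -[[]].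
rewrite size_rcons eqSS -IH; case: b.
  by rewrite (mem_map (@rcons_injl _ true)) (negbTE (notin true false t isT)) orbF.
by rewrite (mem_map (@rcons_injl _ false)) (negbTE (notin false true t isT)).
Qed.

Lemma uniq_bitseqs m : uniq (bitseqs m).
Proof.
elim: m => //= m IH; rewrite cat_uniq !(map_inj_uniq (@rcons_injl _ _)) IH /= andbT.
by apply/hasPn => _ /mapP[t _ ->]; apply/mapP => -[t' _ /rcons_inj[]].
Qed.

Lemma big_bits (R : nmodType) n (G : seq bool -> R) :
  (\sum_(F : {set 'I_n}) G (bits F) = \sum_(s <- bitseqs n) G s)%R.
Proof.
rewrite [RHS](perm_big (map (@bits n) (enum [set: {set 'I_n}]))).
  by rewrite big_map big_enum; apply: eq_bigl => F; rewrite inE.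
apply: uniq_perm; rewrite ?uniq_bitseqs ?(map_inj_uniq (@bits_inj n)) ?enum_uniq //.
move=> s; rewrite mem_bitseqs; apply/eqP/mapP => [sn | [F _ ->]]; last exact: size_bits.
exists [set i : 'I_n | nth false s i]; first by rewrite mem_enum in_setT.
apply: (@eq_from_nth _ false); rewrite ?size_bits // => i lti.
by rewrite sn in lti; rewrite (nth_bits _ (Ordinal lti)) inE.
Qed.

(* The addability of position [p] depends only on positions [p.-1], [p], [p.+1];
   in a prefix all positions but the last are therefore settled. *)
Definition count_settled (s : seq bool) := count (addable_seq s) (iota 0 (size s).-1).

Definition last_addable (s : seq bool) := addable_seq s (size s).-1.

Lemma count_addable_settled s :
  0 < size s -> count_addable s = count_settled s + last_addable s.
Proof.
rewrite /count_addable /count_settled /last_addable; case: (size s) => // m _.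
by rewrite -addn1 iotaD count_cat /= addn0 addn1.
Qed.

Lemma addable_seq_rcons s b i :
  i.+1 < size s -> addable_seq (rcons s b) i = addable_seq s i.
Proof.
move=> lti; rewrite /addable_seq size_rcons !nth_rcons lti.
have -> : i < size s by lia.
have -> : i.-1 < size s by lia.
by have -> : i.+1 < (size s).+1 by lia.
Qed.

Lemma addable_seq_rcons_last s b : 0 < size s ->
  addable_seq (rcons s b) (size s).-1 = last_addable s && (rises (size s).-1 ==> b).
Proof.
move=> s0; rewrite /last_addable /addable_seq size_rcons !nth_rcons prednK // leqnn.
have -> : (size s).-2 < size s by lia.
by rewrite ltnn eqxx ltnSn /= andbT andbA.
Qed.

Lemma last_addable_rcons s b : 0 < size s ->
  last_addable (rcons s b) = ~~ b && (~~ rises (size s).-1 ==> last false s).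
Proof.
move=> s0; rewrite /last_addable /addable_seq size_rcons /= !nth_rcons ltnn eqxx s0.
have -> : (size s).-1 < size s by lia.
by rewrite -nth_last ltnn andbT.
Qed.

Lemma last_addable_last s : last_addable s -> ~~ last false s.
Proof. by rewrite /last_addable /addable_seq nth_last => /and3P[]. Qed.

Lemma filter_seq_rcons s b : 0 < size s ->
  filter_seq (rcons s b) =
  filter_seq s && cover_closed (rises (size s).-1) (last false s) b.
Proof.
move=> s0; rewrite /filter_seq size_rcons /= -{1}(prednK s0) -addn1 iotaD all_cat /=.
rewrite andbT add0n !nth_rcons prednK // leqnn ltnn eqxx -nth_last.
congr (_ && _); apply: eq_in_all => p; rewrite mem_iota add0n => /andP[_ ltp].
rewrite !nth_rcons; have -> : p < size s by lia.
by have -> : p.+1 < size s by lia.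
Qed.

Lemma count_settled_rcons s b : 0 < size s ->
  count_settled (rcons s b) =
  count_settled s + (last_addable s && (rises (size s).-1 ==> b)).
Proof.
move=> s0; rewrite /count_settled size_rcons /= -{1}(prednK s0) -addn1 iotaD.
rewrite count_cat /= addn0 add0n addable_seq_rcons_last //; congr (_ + _).
apply: eq_in_count => p; rewrite mem_iota => /andP[_ ltp].
by apply: addable_seq_rcons; lia.
Qed.

Section Transfer.
Local Open Scope ring_scope.
Variables (R : comNzRingType) (y : R).

Definition filter_sum m := \sum_(s <- bitseqs m) y ^+ count_addable s *+ filter_seq s.

(* The states of the transfer matrix: the last bit is set; it is unset and
   addable so far; it is unset and not addable. *)
Definition state m : R * R * R :=
  (\sum_(s <- bitseqs m) y ^+ count_settled s *+ (filter_seq s && last false s),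
   \sum_(s <- bitseqs m) y ^+ count_settled s *+
     [&& filter_seq s, ~~ last false s & last_addable s],
   \sum_(s <- bitseqs m) y ^+ count_settled s *+
     [&& filter_seq s, ~~ last false s & ~~ last_addable s]).

Definition transfer (r : bool) (t : R * R * R) : R * R * R :=
  let: (u, v, w) := t in
  if r then (u + y * v + w, v + w, 0) else (u, u, y * v + w).

Lemma big_bitseqsS (G : seq bool -> R) m :
  \sum_(s <- bitseqs m.+1) G s =
  \sum_(s <- bitseqs m) (G (rcons s true) + G (rcons s false)).
Proof. by rewrite big_cat !big_map big_split. Qed.

Ltac bits_cases s :=
  case: (boolP (last_addable s)) => [/last_addable_last/negbTE -> | _];
  case: (filter_seq s); try case: (last false s);
  rewrite /= ?addn0 ?addn1 ?exprS ?mulr0n ?mulr1n ?mulr0 ?mul0r ?addr0 ?add0r //.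

Lemma filter_sum_state m :
  (0 < m)%N -> filter_sum m = let: (u, v, w) := state m in u + y * v + w.
Proof.
move=> m0; rewrite /filter_sum /state mulr_sumr -!big_split /=.
apply: eq_big_seq => s; rewrite mem_bitseqs => /eqP sm.
by rewrite count_addable_settled ?sm //; bits_cases s.
Qed.

Lemma state_step m : (0 < m)%N -> state m.+1 = transfer (rises m.-1) (state m).
Proof.
move=> m0; rewrite /state /transfer !big_bitseqsS.
case r: (rises m.-1); congr (_, _, _); rewrite ?mulr_sumr -?big_split /=;
  [ apply: eq_big_seq | apply: eq_big_seq | apply: big1_seq
  | apply: eq_big_seq | apply: eq_big_seq | apply: eq_big_seq ];
  move=> s; rewrite ?andbT mem_bitseqs => /eqP sm;
  rewrite !filter_seq_rcons ?count_settled_rcons ?last_addable_rcons ?last_rcons ?sm //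
    r /cover_closed; bits_cases s.
Qed.

Lemma state1 : state 1 = (1, 1, 0).
Proof. by rewrite /state /= !big_cons !big_nil /= !mulr1n !mulr0n !addr0 add0r. Qed.

End Transfer.

Lemma Y_eq0 n j : 2 <= n -> n./2 < j -> Y (n - j) j = 0.
Proof. by case: j => [|j] le2n ltj; [lia | rewrite /Y !bin_small //; lia]. Qed.

Lemma YS a b : 0 < a -> Y a.+1 b.+1 = Y a b.+1 + Y a b.
Proof.
by case: a => // a _; case: b => [|b]; rewrite /Y !binS ?bin0 /=; lia.
Qed.

Section Lucas.
Local Open Scope ring_scope.
Variables (R : comNzRingType) (y : R).

Definition lucas n := \sum_(0 <= j < n./2.+1) y ^+ j *+ Y (n - j) j.

Lemma lucas_widen n N : (2 <= n)%N -> (n./2 < N)%N ->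
  \sum_(0 <= j < N) y ^+ j *+ Y (n - j) j = lucas n.
Proof.
move=> le2n ltN; rewrite (big_cat_nat _ (n := n./2.+1)) //=.
rewrite [X in _ + X]big1_seq ?addr0 //.
by move=> j; rewrite mem_index_iota => /andP[_ /andP[ltj _]]; rewrite Y_eq0.
Qed.

Lemma lucasSS m : lucas m.+4 = lucas m.+3 + y * lucas m.+2.
Proof.
rewrite -(@lucas_widen m.+4 m.+3) -?(@lucas_widen m.+3 m.+3) -?(@lucas_widen m.+2 m.+2);
  try lia.
rewrite [in LHS]big_nat_recl // [X in _ = X + _]big_nat_recl // -addrA !subn0.
congr (_ + _); rewrite mulr_sumr -big_split.
apply: eq_big_nat => j /andP[_ ltj].
by rewrite !subSS (subSn (ltnW ltj)) YS ?subn_gt0 // mulrnDr exprS mulrnAr.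
Qed.

Lemma lucas2 : lucas 2 = 1 + y *+ 2.
Proof. by rewrite /lucas unlock /= /Y /= expr0 mulr1n expr1 addr0. Qed.

Lemma lucas3 : lucas 3 = 1 + y *+ 3.
Proof. by rewrite /lucas unlock /= /Y /= expr0 mulr1n expr1 addr0. Qed.

Lemma state_even t : state y t.*2.+4 = (lucas t.*2.+3, lucas t.*2.+2, 0).
Proof.
elim: t => [|t IH].
  do 3 rewrite state_step //.
  rewrite state1 /= lucas2 lucas3; congr (_, _, _); ring.
rewrite doubleS 2?state_step // IH.
have -> : rises t.*2.+4 by rewrite /rises; lia.
have -> : rises t.*2.+3 = false by rewrite /rises; lia.
by rewrite /= (lucasSS t.*2.+1) (lucasSS t.*2); congr (_, _, _); ring.
Qed.

Lemma filter_sum_lucas n : (2 <= n)%N -> filter_sum y n = lucas n.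
Proof.
move=> le2n; rewrite filter_sum_state; last lia.
have [[t ->] | [t ->]] : (exists t, n = t.*2.+2)%N \/ (exists t, n = t.*2.+3)%N.
- by case: (boolP (odd n)) => oddn; [right; exists (n - 3)./2 | left; exists (n - 2)./2];
    lia.
- case: t => [|t]; first by rewrite state_step // state1 lucas2 /=; ring.
  by rewrite doubleS state_even lucasSS; ring.
- case: t => [|t]; first by do 2 rewrite state_step //; rewrite state1 lucas3 /=; ring.
  rewrite doubleS state_step // state_even /=.
  have -> : rises t.*2.+3 = false by rewrite /rises; lia.
  by rewrite (lucasSS t.*2.+1) (lucasSS t.*2); ring.
Qed.

End Lucas.

Local Open Scope ring_scope.

Lemma coef_1DX_exp (R : comNzRingType) a k :
  ((1 + 'X : {poly R}) ^+ a)`_k = 'C(a, k)%:R.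
Proof.
elim: a k => [|a IH] [|k]; rewrite ?expr0 ?coef1 // exprSr mulrDr mulr1 coefD coefMX.
  by rewrite /= IH addr0 !bin0.
by rewrite /= !IH -natrD binS.
Qed.

Theorem mainTheorem11 (n : nat) (hn : (2 <= n)%N) :
  forall k : nat,
    (\sum_(j < (n./2).+1) (Y (n - j) j)%:R *: (1 + 'X) ^+ j : {poly int})`_k
    = (q n k)%:R.
Proof.
move=> k; set y : {poly int} := 1 + 'X.
have -> : \sum_(j < n./2.+1) (Y (n - j) j)%:R *: y ^+ j = lucas y n.
  by rewrite /lucas big_mkord; apply: eq_bigr => j _; rewrite scaler_nat.
rewrite -filter_sum_lucas // /filter_sum -big_bits coef_sum.
rewrite (q_eq_sum_filters k (Ordinal (ltnW hn))) natr_sum [RHS]big_mkcond /=.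
apply: eq_bigr => F _; rewrite -is_filter_bits coefMn.
by case: (boolP (is_filter F)) => // fF; rewrite -card_addable_bits // coef_1DX_exp.
Qed.
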